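(* For positive integers $p,q$ and an integer $k\ge0$, $$G_{k+3}(p-1,q)+(-1)^kG_{k+3}(q-1,p)=\sum_{a+b=k}(-1)^b\,\zeta(\{1\}^{p-1},a+2)\,\zeta(\{1\}^{q-1},b+2),$$ where the sum is over nonnegative integers $a,b$ with $a+b=k$.
   Context: $\zeta(\alpha_1,\ldots,\alpha_r)=\sum_{1\le k_1<\cdots<k_r}k_1^{-\alpha_1}\cdots k_r^{-\alpha_r}$ for positive integers $\alpha_i$, $\alpha_r\ge2$; $\{a\}^k$ denotes $k$ repetitions of $a$. For nonnegative integers $n,p,q$, $$G_{n+2}(p,q)=\sum_{1\le k_1<\cdots<k_{p+1}}\frac{1}{k_1\cdots k_p\,k_{p+1}^{n+2}}\sum_{1\le \ell_1\le\cdots\le\ell_q\le k_{p+1}}\frac{1}{\ell_1\cdots\ell_q}.$$ *)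

From HB Require Import structures.
From mathcomp Require Import all_boot all_order all_algebra.
From mathcomp Require Import all_classical all_reals all_analysis.
Set Implicit Arguments. Unset Strict Implicit. Unset Printing Implicit Defensive.
Import Order.TTheory GRing.Theory Num.Theory.
Import numFieldNormedType.Exports.
Local Open Scope ring_scope.

(* mzvT_rev N [:: a_r; ...; a_1] =
     sum_{1 <= k_1 < ... < k_r <= N} k_1^{-a_1} ... k_r^{-a_r}
   (the exponent list is given in reverse order: last exponent first). *)
Fixpoint mzvT_rev (R : realType) (N : nat) (s : seq nat) : R :=
  match s with
  | [::] => 1
  | a :: s' => \sum_(1 <= k < N.+1) (k%:R ^- a) * mzvT_rev R k.-1 s'
  end.

Definition mzvT (R : realType) (N : nat) (s : seq nat) : R := mzvT_rev R N (rev s).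

Definition mzv (R : realType) (s : seq nat) : R := limn (fun N => mzvT R N s).

(* hstar k q = sum_{1 <= l_1 <= ... <= l_q <= k} 1/(l_1 ... l_q) *)
Fixpoint hstar (R : realType) (k q : nat) : R :=
  match q with
  | 0 => 1
  | q'.+1 => \sum_(1 <= l < k.+1) (l%:R)^-1 * hstar R l q'
  end.

(* truncated G_m(p,q): k_{p+1} <= N, with exponent m on k_{p+1} *)
Definition GT (R : realType) (m p q N : nat) : R :=
  \sum_(1 <= k < N.+1)
     (k%:R ^- m) * mzvT_rev R k.-1 (nseq p 1%N) * hstar R k q.

(* G_m(p,q) (the paper writes m = n + 2) *)
Definition G (R : realType) (m p q : nat) : R := limn (fun N => GT R m p q N).

From HB Require Import structures.
From mathcomp Require Import all_boot all_order all_algebra.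
From mathcomp Require Import all_classical all_reals all_analysis.
From mathcomp Require Import ring lra.
Import Order.TTheory GRing.Theory Num.Theory.
Import numFieldNormedType.Exports.
Local Open Scope ring_scope.
Local Open Scope classical_set_scope.

(* Write eharm j n = e_j(1, 1/2, ..., 1/n), so that the truncated zeta({1}^j, s) is
   zetaT j s N = sum_(n < N) eharm j n / (n+1)^s.  The partial-fraction identity
     sum_(a+b=k) (-1)^b x^-(a+2) y^-(b+2) = x^-(k+2) / (y(x+y)) + (-1)^k y^-(k+2) / (x(x+y))
   splits the product of two truncated zeta values into two sums
   sum_m eharm P m (m+1)^-(k+2) hser Q (m+1), with hser Q x = sum_n eharm Q n / ((n+1)(n+1+x)).
   Since m * hser Q m is hstar m (Q+1) up to a truncation error, these are the truncated
   G_(k+3) sums up to errors that vanish in the limit.  All convergence statements rest on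
   eharm j n <= 2^j prod_(i <= n) (1 + 1/(2i)) = O(2^j sqrt n). *)

Lemma sum_alt_powV (F : fieldType) (x y : F) k : x != 0 -> y != 0 -> x + y != 0 ->
  \sum_(a < k.+1) (-1) ^+ (k - a) * x ^- (a + 2) * y ^- (k - a + 2) =
  x ^- (k + 2) / (y * (x + y)) + (-1) ^+ k * y ^- (k + 2) / (x * (x + y)).
Proof.
move=> x0 y0 xy0.
have -> : \sum_(a < k.+1) (-1) ^+ (k - a) * x ^- (a + 2) * y ^- (k - a + 2) =
          (x * y)^-2 * \sum_(a < k.+1) (- y^-1) ^+ (k.+1.-1 - a) * x^-1 ^+ a.
  rewrite mulr_sumr; apply: eq_bigr => a _.
  by rewrite /= -!exprVn invfM !exprD (exprNn y^-1) exprMn; ring.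
have den_neq0 : - y^-1 - x^-1 != 0.
  have -> : - y^-1 - x^-1 = - (x + y) / (x * y) by field; apply/andP.
  by rewrite mulf_neq0 ?oppr_eq0 ?invr_eq0 ?mulf_neq0.
have sum_eq : \sum_(a < k.+1) (- y^-1) ^+ (k.+1.-1 - a) * x^-1 ^+ a =
              ((- y^-1) ^+ k.+1 - x^-1 ^+ k.+1) / (- y^-1 - x^-1).
  by rewrite subrXX mulrC mulKf.
rewrite sum_eq -!exprVn -[k.+1]addn1 !exprD !expr1 (exprNn y^-1).
by field; rewrite xy0 x0 y0 -mulrDr mulf_neq0 // oppr_eq0 oner_eq0.
Qed.

Section TruncatedSums.
Variable R : realType.

Definition eharm (j n : nat) : R := mzvT_rev R n (nseq j 1%N).

Lemma eharm0 n : eharm 0 n = 1.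
Proof. by []. Qed.

Lemma eharmS0 j : eharm j.+1 0 = 0.
Proof. by rewrite /eharm /= big_geq. Qed.

Lemma eharmSS j n : eharm j.+1 n.+1 = eharm j.+1 n + n.+1%:R^-1 * eharm j n.
Proof. by rewrite /eharm /= big_nat_recr //= expr1. Qed.

Lemma eharm_ge0 j n : 0 <= eharm j n.
Proof.
elim: j n => [|j IHj] n; first by rewrite eharm0.
elim: n => [|n IHn]; first by rewrite eharmS0.
by rewrite eharmSS addr_ge0 // mulr_ge0.
Qed.

Lemma hstarS0 q : hstar R 0 q.+1 = 0.
Proof. by rewrite /= big_geq. Qed.

Lemma hstarSS q m : hstar R m.+1 q.+1 = hstar R m q.+1 + m.+1%:R^-1 * hstar R m.+1 q.
Proof. by rewrite /= big_nat_recr. Qed.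

Lemma hstar_ge0 q m : 0 <= hstar R m q.
Proof.
elim: q m => [|q IHq] m; first by [].
elim: m => [|m IHm]; first by rewrite hstarS0.
by rewrite hstarSS addr_ge0 // mulr_ge0.
Qed.

Definition half_prod (n : nat) : R := \prod_(1 <= i < n.+1) (1 + (2 * i%:R)^-1).

Lemma half_prodS n : half_prod n.+1 = half_prod n * (1 + (2 * n.+1%:R)^-1).
Proof. by rewrite /half_prod big_nat_recr. Qed.

Lemma half_prod_ge1 n : 1 <= half_prod n.
Proof.
elim: n => [|n IHn]; first by rewrite /half_prod big_geq.
have : 0 <= (2 * n.+1%:R : R)^-1 by rewrite invr_ge0.
rewrite half_prodS; set x := _^-1 => x_ge0; nra.
Qed.

(* Compare coefficients in sum_j eharm j n * t ^+ j = prod_(1 <= i <= n) (1 + t / i) at t = 1/2. *)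
Lemma eharm_le_half_prod j n : eharm j n <= 2 ^+ j * half_prod n.
Proof.
elim: n j => [|n IHn] [|j].
- by rewrite eharm0 /half_prod big_geq // mulr1.
- by rewrite eharmS0 mulr_ge0 // ?exprn_ge0 // (le_trans ler01 (half_prod_ge1 _)).
- by rewrite eharm0 mul1r half_prod_ge1.
have x_ge0 : 0 <= (n.+1%:R : R)^-1 by rewrite invr_ge0.
have := ler_wpM2l x_ge0 (IHn j); have := IHn j.+1.
rewrite eharmSS half_prodS invfM exprS.
set x := _^-1; set P := half_prod n; set t := 2 ^+ j.
have -> : 2 * t * (P * (1 + 2^-1 * x)) = 2 * (t * P) + x * (t * P) by field.
lra.
Qed.

Lemma half_prod_sqr_le n : half_prod n ^+ 2 <= 2 * n%:R + 1.
Proof.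
elim: n => [|n IHn]; first by rewrite /half_prod big_geq // expr1n; lra.
rewrite half_prodS exprMn -(natr1 n).
have n_ge0 : 0 <= n%:R :> R by [].
set y := n%:R in IHn n_ge0 *.
have -> : (1 + (2 * (y + 1))^-1) ^+ 2 = (2 * y + 3) ^+ 2 / (2 * y + 2) ^+ 2.
  by field; lra.
have den_gt0 : 0 < (2 * y + 2) ^+ 2 by rewrite exprn_gt0 //; lra.
rewrite mulrA ler_pdivrMr //.
have : 0 <= half_prod n ^+ 2 by rewrite sqr_ge0.
nra.
Qed.

Lemma half_prod_step_le n :
  half_prod n.+1 / n.+2%:R ^+ 2 <=
  2 * half_prod n.+1 / n.+1%:R - 2 * half_prod n.+2 / n.+2%:R.
Proof.
rewrite [half_prod n.+2]half_prodS -!(natr1 n.+1) -(natr1 n).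
have P_ge1 := half_prod_ge1 n.+1.
have n_ge0 : 0 <= n%:R :> R by [].
set P := half_prod n.+1 in P_ge1 *; set y := n%:R + 1.
have y_ge1 : 1 <= y by rewrite /y; lra.
rewrite -subr_ge0.
have -> : 2 * P / y - 2 * (P * (1 + (2 * (y + 1))^-1)) / (y + 1) - P / (y + 1) ^+ 2
        = 2 * P / (y * (y + 1) ^+ 2) by field; lra.
apply: divr_ge0; first lra.
by apply: mulr_ge0; [lra | exact: sqr_ge0].
Qed.

Lemma sum_half_prod_le N : \sum_(0 <= n < N) half_prod n / n.+1%:R ^+ 2 <= 4.
Proof.
case: N => [|N]; first by rewrite big_geq.
pose u n := 2 * half_prod n.+1 / n.+1%:R.
have uN_ge0 : 0 <= u N.
  by rewrite /u divr_ge0 // mulr_ge0 // (le_trans ler01 (half_prod_ge1 _)).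
have u0 : u 0%N = 3 by rewrite /u /half_prod big_nat1; field.
have step n : half_prod n.+1 / n.+2%:R ^+ 2 <= u n - u n.+1 := half_prod_step_le n.
have telescope : \sum_(0 <= n < N) (u n - u n.+1) = u 0%N - u N.
  rewrite (telescope_sumr_eq (fun n => - u n)) ?opprK 1?addrC // => n _.
  by rewrite opprK addrC.
have := @ler_sum_nat _ 0 N _ _ (fun n _ => step n).
rewrite big_nat_recl //= telescope.
have -> : half_prod 0 / 1 ^+ 2 = 1 by rewrite /half_prod big_geq // expr1n divr1.
lra.
Qed.

Definition zetaT (j s N : nat) : R := \sum_(0 <= n < N) n.+1%:R ^- s * eharm j n.

Lemma zetaT_le j s N : (2 <= s)%N -> zetaT j s N <= 2 ^+ j * 4.
Proof.
move=> s_ge2; have two_pow_ge0 : 0 <= 2 ^+ j :> R by rewrite exprn_ge0.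
apply: le_trans (ler_wpM2l two_pow_ge0 (sum_half_prod_le N)).
rewrite mulr_sumr; apply: ler_sum_nat => n _.
have n1_ge1 : 1 <= n.+1%:R :> R by rewrite ler1n.
have pow_le : n.+1%:R ^- s <= (n.+1%:R ^+ 2 : R)^-1.
  rewrite lef_pV2 ?posrE ?exprn_gt0 ?ltr0n //.
  exact: ler_weXn2l.
rewrite mulrA [X in X <= _]mulrC ler_pM ?invr_ge0 ?exprn_ge0 ?eharm_ge0 //.
exact: eharm_le_half_prod.
Qed.

Lemma mzvT_rcons_nseq1 j s N : mzvT R N (rcons (nseq j 1%N) s) = zetaT j s N.
Proof.
rewrite /mzvT rev_rcons /zetaT /= big_add1.
suff -> : rev (nseq j 1%N) = nseq j 1%N by [].
by elim: j => //= j IHj; rewrite rev_cons IHj -cats1 -(nseqD j 1%N 1%N) addn1.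
Qed.

Definition hser (j N : nat) (x : R) : R :=
  \sum_(0 <= n < N) eharm j n / ((n%:R + 1) * (n%:R + 1 + x)).

(* m * hser j N m tends to hstar R m j.+1 as N grows; herr is the truncation error. *)
Definition herr (j N m : nat) : R := hstar R m j.+1 - m%:R * hser j N m%:R.

Lemma hser_diff j N m :
  m.+1%:R * hser j N m.+1%:R - m%:R * hser j N m%:R =
  \sum_(0 <= n < N) eharm j n * ((n%:R + m%:R + 1)^-1 - (n%:R + m%:R + 2)^-1).
Proof.
rewrite /hser !mulr_sumr -sumrB; apply: eq_bigr => n _.
rewrite -natr1.
have n_ge0 : 0 <= n%:R :> R by []; have m_ge0 : 0 <= m%:R :> R by [].
by field; rewrite !lt0r_neq0 //; lra.
Qed.

Lemma eharmS_sum_by_parts j N m :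
  \sum_(0 <= n < N.+1) eharm j.+1 n * ((n%:R + m%:R + 1)^-1 - (n%:R + m%:R + 2)^-1)
  = hser j N m.+1%:R - eharm j.+1 N / (N%:R + m%:R + 2).
Proof.
elim: N => [|N IHN]; first by rewrite big_nat1 /hser big_geq // eharmS0 !mul0r subr0.
rewrite big_nat_recr //= IHN /hser big_nat_recr //= -/(hser j N m.+1%:R) eharmSS -!natr1.
have N_ge0 : 0 <= N%:R :> R by []; have m_ge0 : 0 <= m%:R :> R by [].
by field; rewrite !lt0r_neq0 //; lra.
Qed.

Lemma herr0 j N : herr j N 0 = 0.
Proof. by rewrite /herr hstarS0 mul0r subr0. Qed.

Lemma herr_base N m : herr 0 N m = \sum_(0 <= i < m) (N%:R + i%:R + 1)^-1.
Proof.
elim: m => [|m IHm]; first by rewrite herr0 big_geq.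
have telescope :
    \sum_(0 <= n < N) ((n%:R + m%:R + 1)^-1 - (n%:R + m%:R + 2)^-1) =
    (m%:R + 1)^-1 - (N%:R + m%:R + 1)^-1 :> R.
  rewrite (telescope_sumr_eq (fun n => - (n%:R + m%:R + 1)^-1)) // ?add0r ?opprK.
    by rewrite addrC.
  by move=> n _; rewrite opprK addrC -(natr1 n); congr (- _^-1 + _); ring.
have hser_step : m.+1%:R * hser 0 N m.+1%:R - m%:R * hser 0 N m%:R =
                 (m%:R + 1)^-1 - (N%:R + m%:R + 1)^-1.
  by rewrite hser_diff -telescope; apply: eq_bigr => n _; rewrite eharm0 mul1r.
rewrite big_nat_recr //= -IHm /herr hstarSS /= mulr1 -(natr1 m).
rewrite -(natr1 m) in hser_step.
lra.
Qed.

Lemma herrSS j N m :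
  herr j.+1 N.+1 m.+1 =
  herr j.+1 N.+1 m + herr j N m.+1 / (m%:R + 1) + eharm j.+1 N / (N%:R + m%:R + 2).
Proof.
have := hser_diff j.+1 N.+1 m; rewrite eharmS_sum_by_parts => hser_step.
rewrite /herr hstarSS -(natr1 m) in hser_step *.
have m_ge0 : 0 <= m%:R :> R by [].
have -> : (m%:R + 1) * hser j.+1 N.+1 (m%:R + 1) =
          m%:R * hser j.+1 N.+1 m%:R + (hser j N (m%:R + 1) - eharm j.+1 N / (N%:R + m%:R + 2)).
  by rewrite -hser_step; ring.
by field; rewrite lt0r_neq0 //; lra.
Qed.

Fixpoint herr_bound (j N : nat) : R :=
  if j is j'.+1 then herr_bound j' N + eharm j'.+1 (N + j') / ((N + j')%:R + 2)
  else (N%:R + 1)^-1.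

Lemma herr_bound_ge0 j N : 0 <= herr_bound j N.
Proof.
elim: j => [|j IHj] /=; first by rewrite invr_ge0 addr_ge0.
by rewrite addr_ge0 // divr_ge0 ?eharm_ge0 // addr_ge0.
Qed.

Lemma herr_base_bounded N m : 0 <= herr 0 N m <= m%:R * (N%:R + 1)^-1.
Proof.
rewrite herr_base /= sumr_ge0 /= => [|i _]; last by rewrite invr_ge0 !addr_ge0.
have -> : m%:R * (N%:R + 1)^-1 = \sum_(0 <= i < m) (N%:R + 1 : R)^-1.
  by rewrite sumr_const_nat subn0 mulr_natl.
apply: ler_sum_nat => i _.
have N_ge0 : 0 <= N%:R :> R by []; have i_ge0 : 0 <= i%:R :> R by [].
by rewrite lef_pV2 ?posrE; lra.
Qed.

Lemma herr_bounded j N m : 0 <= herr j (N + j) m <= m%:R * herr_bound j N.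
Proof.
elim: j N m => [|j IHj] N m; first by rewrite addn0 herr_base_bounded.
rewrite addnS; elim: m => [|m IHm]; first by rewrite herr0 mul0r lexx.
have /andP[IH_ge0 IH_le] := IHj N m.+1.
have /andP[IHm_ge0 IHm_le] := IHm; rewrite /= in IHm_le.
have m_ge0 : 0 <= m%:R :> R by []; have n_ge0 : 0 <= (N + j)%:R :> R by [].
have e_ge0 := eharm_ge0 j.+1 (N + j).
have herr_div_le : herr j (N + j) m.+1 / (m%:R + 1) <= herr_bound j N.
  by rewrite ler_pdivrMr; [rewrite mulrC natr1 | lra].
have eharm_div_le : eharm j.+1 (N + j) / ((N + j)%:R + m%:R + 2)
                    <= eharm j.+1 (N + j) / ((N + j)%:R + 2).
  by rewrite ler_wpM2l // lef_pV2 ?posrE; lra.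
have herr_div_ge0 : 0 <= herr j (N + j) m.+1 / (m%:R + 1) by rewrite divr_ge0 //; lra.
have eharm_div_ge0 : 0 <= eharm j.+1 (N + j) / ((N + j)%:R + m%:R + 2).
  by rewrite divr_ge0 //; lra.
rewrite herrSS /= -natr1; apply/andP; split; lra.
Qed.

Lemma hser_le_zetaT j N (x : R) : 0 <= x -> hser j N x <= zetaT j 2 N.
Proof.
move=> x_ge0; apply: ler_sum_nat => n _.
have n_ge0 : 0 <= n%:R :> R by [].
rewrite mulrC ler_wpM2r ?eharm_ge0 // -natr1 lef_pV2 ?posrE ?expr2; nra.
Qed.

Lemma hstar_le_lin j m : hstar R m j.+1 <= m%:R * (herr_bound j 0 + 2 ^+ j * 4).
Proof.
have /andP[_ herr_le] := herr_bounded j 0 m.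
have hser_le : hser j (0 + j) m%:R <= 2 ^+ j * 4.
  exact: le_trans (@hser_le_zetaT j _ m%:R (ler0n R m)) (@zetaT_le j 2 _ (leqnn 2)).
have := ler_wpM2l (ler0n R m) hser_le.
move: herr_le; rewrite /herr; lra.
Qed.

Lemma cvg0_sqr_le (u v : R^nat) :
  (forall n, 0 <= u n) -> (forall n, u n ^+ 2 <= v n) -> v @ \oo --> 0 -> u @ \oo --> 0.
Proof.
move=> u_ge0 uv v0.
apply: (@squeeze_cvgr _ _ _ _ (fun=> 0) (Num.sqrt \o v)); last 2 first.
- exact: cvg_cst.
- by rewrite -sqrtr0; apply: cvg_comp v0 _; exact: sqrt_continuous.
near=> n; rewrite u_ge0 /= -(ger0_norm (u_ge0 n)) -sqrtr_sqr.
by rewrite ler_sqrt // (le_trans (sqr_ge0 _) (uv n)).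
Unshelve. all: by end_near.
Qed.

Lemma eharm_div_cvg0 i : (fun n => eharm i n / (n%:R + 2)) @ \oo --> 0.
Proof.
pose t : R := 2 ^+ i.
have t_ge0 : 0 <= t by rewrite exprn_ge0.
have t2_ge0 : 0 <= t ^+ 2 by rewrite sqr_ge0.
have sqr_le n : (eharm i n / (n%:R + 2)) ^+ 2 <= 2 * t ^+ 2 * harmonic n.
  rewrite /harmonic /= -(natr1 n).
  have n_ge0 : 0 <= n%:R :> R by [].
  have e_ge0 := eharm_ge0 i n; have e_le : eharm i n <= t * half_prod n := eharm_le_half_prod i n.
  have P_sqr_le := half_prod_sqr_le n; have P_ge1 := half_prod_ge1 n.
  have e_sqr_le : eharm i n ^+ 2 <= t ^+ 2 * (2 * n%:R + 1).
    apply: (le_trans (y := (t * half_prod n) ^+ 2)); first by rewrite lerXn2r ?nnegrE; nra.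
    by rewrite exprMn ler_wpM2l.
  have den_gt0 : 0 < (n%:R + 2) ^+ 2 :> R by rewrite exprn_gt0 //; lra.
  rewrite expr_div_n ler_pdivrMr // mulrAC ler_pdivlMr; last by lra.
  have : (2 * n%:R + 1) * (n%:R + 1) <= 2 * (n%:R + 2) ^+ 2 :> R by nra.
  move=> /(ler_wpM2l t2_ge0); nra.
apply: (@cvg0_sqr_le _ _ _ sqr_le).
  by move=> n; rewrite divr_ge0 ?eharm_ge0 // addr_ge0.
by rewrite -(mulr0 (2 * t ^+ 2)); apply: cvgMl_tmp; exact: cvg_harmonic.
Qed.

Lemma herr_bound_cvg0 j : herr_bound j @ \oo --> 0.
Proof.
elim: j => [|j IHj] /=.
  have -> : (fun N => (N%:R + 1)^-1) = @harmonic R.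
    by apply: funext => N; rewrite /harmonic /= -natr1.
  exact: cvg_harmonic.
rewrite -[0]addr0; apply: cvgD => //.
by have := eharm_div_cvg0 j.+1; rewrite -(cvg_shiftn j).
Qed.

Lemma zetaT_cvg j s : (2 <= s)%N -> zetaT j s @ \oo --> mzv R (rcons (nseq j 1%N) s).
Proof.
move=> s_ge2.
have -> : mzv R (rcons (nseq j 1%N) s) = limn (zetaT j s).
  by rewrite /mzv; congr (limn _); apply: funext => N; exact: mzvT_rcons_nseq1.
apply: nondecreasing_is_cvgn.
  by apply: nondecreasing_series => n _ _; rewrite mulr_ge0 ?eharm_ge0 // invr_ge0 exprn_ge0.
by exists (2 ^+ j * 4) => _ [N _ <-]; exact: zetaT_le.
Qed.

Lemma GT_shift m p q N :
  GT R m p q N = \sum_(0 <= n < N) n.+1%:R ^- m * eharm p n * hstar R n.+1 q.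
Proof. by rewrite /GT big_add1. Qed.

Definition GT_hser (P Q k M : nat) : R :=
  \sum_(0 <= m < M) m.+1%:R ^- (k + 2) * eharm P m * hser Q M m.+1%:R.

Definition GT_herr (P Q k M : nat) : R :=
  \sum_(0 <= m < M) m.+1%:R ^- (k + 3) * eharm P m * herr Q M m.+1.

Lemma GT_split P Q k M : GT R (k + 3) P Q.+1 M = GT_herr P Q k M + GT_hser P Q k M.
Proof.
rewrite GT_shift -big_split; apply: eq_bigr => m _.
have -> : hstar R m.+1 Q.+1 = herr Q M m.+1 + m.+1%:R * hser Q M m.+1%:R.
  by rewrite /herr subrK.
have x_neq0 : m.+1%:R != 0 :> R by rewrite pnatr_eq0.
by rewrite addnS exprS invfM /=; field; rewrite expf_neq0 //= addrC natr1.
Qed.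

Definition zetaT_conv (P Q k M : nat) : R :=
  \sum_(a < k.+1) (-1) ^+ (k - a) * zetaT P (a + 2) M * zetaT Q (k - a + 2) M.

Lemma zetaT_conv_split P Q k M :
  zetaT_conv P Q k M = GT_hser P Q k M + (-1) ^+ k * GT_hser Q P k M.
Proof.
have -> : zetaT_conv P Q k M = \sum_(0 <= m < M) \sum_(0 <= n < M)
    eharm P m * eharm Q n * \sum_(a < k.+1)
      (-1) ^+ (k - a) * m.+1%:R ^- (a + 2) * n.+1%:R ^- (k - a + 2).
  rewrite /zetaT_conv /zetaT.
  transitivity (\sum_(a < k.+1) \sum_(0 <= m < M) \sum_(0 <= n < M) (-1) ^+ (k - a) *
    (m.+1%:R ^- (a + 2) * eharm P m * (n.+1%:R ^- (k - a + 2) * eharm Q n))).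
    apply: eq_bigr => a _; rewrite -mulrA big_distrlr mulr_sumr.
    by apply: eq_bigr => m _; rewrite mulr_sumr.
  rewrite exchange_big; apply: eq_bigr => m _.
  rewrite exchange_big; apply: eq_bigr => n _.
  by rewrite mulr_sumr; apply: eq_bigr => a _; ring.
rewrite /GT_hser /hser !mulr_sumr.
under [X in _ = _ + X]eq_bigr => n _ do rewrite !mulr_sumr.
rewrite [X in _ = _ + X]exchange_big -big_split; apply: eq_bigr => m _.
rewrite mulr_sumr -big_split; apply: eq_bigr => n _ /=.
have m_gt0 : 0 < m.+1%:R :> R by []; have n_gt0 : 0 < n.+1%:R :> R by [].
rewrite sum_alt_powV ?lt0r_neq0 ?addr_gt0 // !natr1.
move: (m.+1%:R) (n.+1%:R) m_gt0 n_gt0 => x y x_gt0 y_gt0.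
by field; rewrite ?expf_neq0 ?lt0r_neq0 ?addr_gt0.
Qed.

Lemma GT_alt_sum P Q k M :
  GT R (k + 3) P Q.+1 M + (-1) ^+ k * GT R (k + 3) Q P.+1 M =
  zetaT_conv P Q k M + (GT_herr P Q k M + (-1) ^+ k * GT_herr Q P k M).
Proof. by rewrite !GT_split zetaT_conv_split; ring. Qed.

Lemma powV_shift_le (x e h B : R) k : 0 < x -> 0 <= e -> h <= x * B ->
  x ^- (k + 3) * e * h <= B * (x ^- (k + 2) * e).
Proof.
move=> x_gt0 e_ge0 h_le.
have w_ge0 : 0 <= x ^- (k + 3) * e by rewrite mulr_ge0 // invr_ge0 exprn_ge0 // ltW.
apply: le_trans (ler_wpM2l w_ge0 h_le) _.
have x_neq0 : x != 0 by rewrite lt0r_neq0.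
suff -> : x ^- (k + 3) * e * (x * B) = B * (x ^- (k + 2) * e) by [].
by rewrite addnS exprS invfM; field; rewrite x_neq0 expf_neq0.
Qed.

Lemma GT_herr_bounded P Q k N :
  0 <= GT_herr P Q k (N + Q) <= herr_bound Q N * (2 ^+ P * 4).
Proof.
apply/andP; split.
  apply: sumr_ge0 => m _; have /andP[herr_ge0 _] := herr_bounded Q N m.+1.
  by rewrite mulr_ge0 // mulr_ge0 ?eharm_ge0 // invr_ge0 exprn_ge0.
apply: le_trans (_ : herr_bound Q N * zetaT P (k + 2) (N + Q) <= _); last first.
  by rewrite ler_wpM2l ?herr_bound_ge0 // zetaT_le // addn2.
rewrite /GT_herr /zetaT mulr_sumr; apply: ler_sum_nat => m _.
have /andP[_ herr_le] := herr_bounded Q N m.+1.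
exact: powV_shift_le (eharm_ge0 P m) herr_le.
Qed.

Lemma GT_herr_cvg0 P Q k : GT_herr P Q k @ \oo --> 0.
Proof.
rewrite -(cvg_shiftn Q).
apply: (@squeeze_cvgr _ _ _ _ (fun=> 0) (fun N => herr_bound Q N * (2 ^+ P * 4))).
- by near=> N; exact: GT_herr_bounded.
- exact: cvg_cst.
- by rewrite -(mul0r (2 ^+ P * 4)); apply: cvgMr_tmp; exact: herr_bound_cvg0.
Unshelve. all: by end_near.
Qed.

Lemma GT_cvg P Q k : GT R (k + 3) P Q.+1 @ \oo --> G R (k + 3) P Q.+1.
Proof.
change (GT R (k + 3) P Q.+1 @ \oo --> limn (GT R (k + 3) P Q.+1)).
have -> : GT R (k + 3) P Q.+1 = fun M => \sum_(0 <= m < M)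
    m.+1%:R ^- (k + 3) * eharm P m * hstar R m.+1 Q.+1.
  by apply: funext => M; exact: GT_shift.
apply: nondecreasing_is_cvgn.
  apply: nondecreasing_series => m _ _.
  by rewrite mulr_ge0 ?hstar_ge0 // mulr_ge0 ?eharm_ge0 // invr_ge0 exprn_ge0.
pose C := herr_bound Q 0 + 2 ^+ Q * 4.
have C_ge0 : 0 <= C by rewrite addr_ge0 ?herr_bound_ge0 // mulr_ge0 // exprn_ge0.
exists (C * (2 ^+ P * 4)) => _ [M _ <-].
apply: le_trans (_ : C * zetaT P (k + 2) M <= _); last first.
  by rewrite ler_wpM2l // zetaT_le // addn2.
rewrite /zetaT mulr_sumr; apply: ler_sum_nat => m _.
exact: powV_shift_le (eharm_ge0 P m) (hstar_le_lin Q m.+1).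
Qed.
End TruncatedSums.

Theorem proposition2p4 (R : realType) (p q k : nat) (hp : (0 < p)%N) (hq : (0 < q)%N) :
  G R (k + 3) (p - 1) q + (-1) ^+ k * G R (k + 3) (q - 1) p =
  \sum_(a < k.+1)
     (-1) ^+ (k - a) * mzv R (rcons (nseq (p - 1) 1%N) (a + 2)%N)
                     * mzv R (rcons (nseq (q - 1) 1%N) ((k - a) + 2)%N).
Proof.
case: p hp => // P _; case: q hq => // Q _; rewrite !subn1 /=.
set rhs := (X in _ = X).
pose lhsT M := GT R (k + 3) P Q.+1 M + (-1) ^+ k * GT R (k + 3) Q P.+1 M.
have lhs_cvg : lhsT @ \oo --> G R (k + 3) P Q.+1 + (-1) ^+ k * G R (k + 3) Q P.+1.
  by apply: cvgD; [|apply: cvgMl_tmp]; exact: GT_cvg.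
have rhs_cvg : lhsT @ \oo --> rhs.
  rewrite /lhsT; under eq_fun do rewrite GT_alt_sum.
  have -> : rhs = rhs + (0 + (-1) ^+ k * 0) by rewrite mulr0 !addr0.
  apply: cvgD; last by apply: cvgD; [|apply: cvgMl_tmp]; exact: GT_herr_cvg0.
  apply: (cvg_big add_continuous) => // a _.
  by apply: cvgM; [apply: cvgMl_tmp|]; apply: zetaT_cvg; rewrite addn2.
exact: (cvg_unique (@Rhausdorff R) lhs_cvg rhs_cvg).
Qed.
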